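(* Consider the family of distributions on $[0,1]$ with densities, with respect to the measure $\lambda+\delta_0+\delta_1$ (where $\lambda$ is Lebesgue measure and $\delta_c$ is the point mass at $c$), $$\mathrm{beinf}(y;\alpha,\gamma,\mu,\phi)=\begin{cases}\alpha(1-\gamma), & y=0,\\ \alpha\gamma, & y=1,\\ (1-\alpha)f(y;\mu,\phi), & y\in(0,1),\end{cases}$$ indexed by $(\alpha,\gamma,\mu,\phi)\in(0,1)\times(0,1)\times(0,1)\times(0,\infty)$, where $$f(y;\mu,\phi)=\frac{\Gamma(\phi)}{\Gamma(\mu\phi)\Gamma((1-\mu)\phi)}\,y^{\mu\phi-1}(1-y)^{(1-\mu)\phi-1},\quad y\in(0,1),$$ is the beta density with mean $\mu$ and precision $\phi$ (the zero-and-one-inflated beta distribution $\mathrm{BEINF}(\alpha,\gamma,\mu,\phi)$). Then this family is a four-parameter exponential family of full rank.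
   Context: A family of densities $\{p_\theta:\theta\in\Theta\}$ with respect to a measure $\nu$ on a space $\mathcal Y$ is called a $k$-parameter exponential family of full rank if there are a one-to-one map $\theta\mapsto\eta(\theta)\in\mathbb R^k$, a statistic $T=(t_1,\dots,t_k):\mathcal Y\to\mathbb R^k$, a real function $B^*$ and a positive function $h$ on $\mathcal Y$ such that $p_\theta(y)=\exp\{\eta(\theta)^\top T(y)-B^*(\eta(\theta))\}h(y)$ for all $y$ and $\theta$, where neither the components $t_1,\dots,t_k$ nor the components of $\eta$ satisfy a linear constraint, and the set $\{\eta(\theta):\theta\in\Theta\}$ contains a $k$-dimensional open rectangle. *)

From HB Require Import structures.
From mathcomp Require Import all_boot all_order all_algebra.
From mathcomp Require Import all_classical all_reals all_analysis.
Set Implicit Arguments. Unset Strict Implicit. Unset Printing Implicit Defensive.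
Import Order.TTheory GRing.Theory Num.Theory.
Import numFieldNormedType.Exports.
Local Open Scope classical_set_scope.
Local Open Scope ring_scope.

Definition Gamma (R : realType) (s : R) : R :=
  fine (\int[@lebesgue_measure R]_(x in `]0%R, +oo[) ((x `^ (s - 1)) * expR (- x))%:E)%E.

Definition beta_dens (R : realType) (y mu phi : R) : R :=
  Gamma phi / (Gamma (mu * phi) * Gamma ((1 - mu) * phi))
  * y `^ (mu * phi - 1) * (1 - y) `^ ((1 - mu) * phi - 1).

Definition beinf_param_space (R : realType) : set (R * R * R * R) :=
  [set th | let: (a, g, m, p) := th in
     [/\ 0 < a < 1, 0 < g < 1, 0 < m < 1 & 0 < p]].

(* BEINF density w.r.t. lambda + delta_0 + delta_1 on [0,1]
   (value outside [0,1] irrelevant; set to 0). *)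
Definition beinf (R : realType) (y : R) (th : R * R * R * R) : R :=
  let: (a, g, m, p) := th in
  if y == 0 then a * (1 - g)
  else if y == 1 then a * g
  else if (0 < y) && (y < 1) then (1 - a) * beta_dens y m p
  else 0.

(* The dominating measure nu = lambda + delta_0 + delta_1 on R (the family
   lives on [0,1]). *)
Definition nu (R : realType) : {measure set (measurableTypeR R) -> \bar R} :=
  measure_add (measure_add (@lebesgue_measure R)
    (@dirac _ (measurableTypeR R) 0%R R)) (@dirac _ (measurableTypeR R) 1%R R).

Definition dotv (R : realType) (k : nat) (u v : 'I_k -> R) : R :=
  \sum_(i < k) u i * v i.

(* k-parameter exponential family of full rank (densities p_theta w.r.t. a
   measure nu on the space Ysp, parameter set Th). "No linear constraint" on
   T is understood nu-almost everywhere on Ysp; on eta, over all of Th. *)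
Definition exp_family_full_rank (R : realType) (d : measure_display)
  (Y : measurableType d) (nu0 : {measure set Y -> \bar R}) (Ysp : set Y)
  (Theta : Type) (Th : set Theta) (p : Theta -> Y -> R) (k : nat) : Prop :=
  exists (eta : Theta -> 'I_k -> R) (T : Y -> 'I_k -> R)
         (Bstar : ('I_k -> R) -> R) (h : Y -> R),
  (forall t1 t2, Th t1 -> Th t2 -> eta t1 = eta t2 -> t1 = t2) /\
      (forall y, Ysp y -> 0 < h y) /\
      (forall th y, Th th -> Ysp y ->
          p th y = expR (dotv (eta th) (T y) - Bstar (eta th)) * h y) /\
      (forall (a : 'I_k -> R) (c : R),
          {ae nu0, forall y, Ysp y -> dotv a (T y) = c} -> a = (fun=> 0)) /\
      (forall (a : 'I_k -> R) (c : R),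
          (forall th, Th th -> dotv a (eta th) = c) -> a = (fun=> 0)) /\
      (exists lo hi : 'I_k -> R, (forall i, lo i < hi i) /\
          (forall x : 'I_k -> R, (forall i, lo i < x i < hi i) ->
             exists2 th, Th th & eta th = x)).

(* The log-density is affine in the statistic
   [T y = (1[y = 0], 1[y = 1], ln y, ln (1 - y))]: with
   [C = Gamma phi / (Gamma (mu phi) Gamma ((1 - mu) phi))] the natural parameter is
   [eta = (ln (alpha (1 - gamma) / ((1 - alpha) C)), ln (alpha gamma / ((1 - alpha) C)),
           mu phi, (1 - mu) phi)],
   with [B (eta) = - ln ((1 - alpha) C)] and [h y = 1 / (y (1 - y))] on (0, 1).
   As [Gamma > 0], [eta] has an explicit inverse on [R x R x (0, oo) x (0, oo)], so it
   is one-to-one with open range.  The components of [T] are affinely independent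
   nu-a.e. because nu charges both atoms and every open subinterval of (0, 1), on
   which [a ln y + b ln (1 - y)] is continuous, and constant only for [a = b = 0]. *)

From HB Require Import structures.
From mathcomp Require Import all_boot all_order all_algebra.
From mathcomp Require Import all_classical all_reals all_analysis.
From mathcomp Require Import ring lra measurable_realfun.
Set Implicit Arguments. Unset Strict Implicit. Unset Printing Implicit Defensive.
Import Order.TTheory GRing.Theory Num.Theory.
Import numFieldNormedType.Exports.
Local Open Scope classical_set_scope.
Local Open Scope ring_scope.

Section Gamma_positive.
Context {R : realType}.
Notation mu := (@lebesgue_measure R).
Implicit Types (s x : R).

Definition gamma_integrand s x : R := x `^ (s - 1) * expR (- x).

Lemma gamma_integrand_ge0 s x : 0 <= gamma_integrand s x.
Proof. by rewrite mulr_ge0 ?powR_ge0 ?expR_ge0. Qed.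

Lemma measurable_gamma_integrand s (A : set R) :
  measurable_fun A (EFin \o gamma_integrand s).
Proof.
apply/measurable_EFinP; apply: measurable_funTS.
apply: measurable_funM; first exact: measurable_powR.
apply: measurableT_comp; first exact: measurable_expR.
exact: oppr_measurable.
Qed.

Lemma integral_powR_itv1 s a : 0 < s -> 0 < a < 1 ->
  (\int[mu]_(x in `[a, 1%R]) (x `^ (s - 1))%:E = (s^-1 - s^-1 * a `^ s)%:E)%E.
Proof.
move=> s0 /andP[a0 a1].
pose F x := s^-1 * x `^ s.
have dpow x r : 0 < x -> derivable (@powR R ^~ r) x 1.
  by move=> x0; apply: derivable_powR; rewrite in_itv/= andbT.
have dF x : 0 < x -> derivable F x 1 by move=> x0; apply/derivableM/dpow.
have cF x : 0 < x -> {for x, continuous F}.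
  by move=> x0; apply/differentiable_continuous; rewrite -derivable1_diffP; exact: dF.
have -> : s^-1 - s^-1 * a `^ s = F 1 - F a by rewrite /F powR1 mulr1.
rewrite EFinB.
apply: (@continuous_FTC2 R (@powR R ^~ (s - 1)) F) => //.
- apply: derivable_within_continuous => x; rewrite in_itv/= => /andP[ax _].
  exact: dpow (lt_le_trans a0 ax).
- split; [|exact/cvg_at_right_filter/cF|exact/cvg_at_left_filter/cF].
  by move=> x; rewrite in_itv/= => /andP[ax _]; apply: dF; exact: lt_trans ax.
- move=> x; rewrite in_itv/= => /andP[ax _].
  have x0 : 0 < x by exact: lt_trans ax.
  rewrite derive1Ml; last exact: dpow.
  by rewrite powR_derive1 ?in_itv/= ?andbT// mulrA mulVf ?mul1r ?gt_eqF.
Qed.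

(* Monotone convergence over the exhaustion [1/(n+2), 1] of ]0, 1]. *)
Lemma integral_powR_itv01_le s : 0 < s ->
  (\int[mu]_(x in `]0%R, 1%R]) (x `^ (s - 1))%:E <= (s^-1)%:E)%E.
Proof.
move=> s0.
pose F (n : nat) : set R := [set` `[(n.+2%:R)^-1, 1%R]].
have F_nd : {homo F : n m / (n <= m)%N >-> (n <= m)%O}.
  move=> n m nm; apply/subsetPset => x; rewrite /F /= !in_itv/= => /andP[h1 ->].
  rewrite andbT; apply: le_trans h1.
  by rewrite lef_pV2 ?posrE ?ltr0n// ler_nat ltnS.
have mpow i : measurable_fun (F i) (EFin \o (fun x : R => x `^ (s - 1))).
  by apply/measurable_EFinP; apply: measurable_funTS; exact: measurable_powR.
have F_cvg := @ge0_nondecreasing_set_cvg_integral _ _ _ _ _ mu F_nd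
  (fun=> measurable_itv _) mpow (fun i x _ => powR_ge0 _ _).
have F_bigcup : \bigcup_i F i = [set` `]0%R, 1%R]].
  apply/seteqP; split => x /=.
    move=> [n _]; rewrite /F /= !in_itv/= => /andP[h1 ->]; rewrite andbT.
    by apply: lt_le_trans h1; rewrite invr_gt0 ltr0n.
  rewrite in_itv/= => /andP[x0 x1].
  exists (Num.truncn x^-1) => //; rewrite /F /= in_itv/= x1 andbT.
  rewrite -[x in (_ <= x)]invrK lef_pV2 ?posrE ?ltr0n ?invr_gt0//.
  by apply/ltW/(lt_le_trans (truncnS_gt _)); rewrite ler_nat.
rewrite -F_bigcup -(cvg_lim _ F_cvg) //.
apply: lime_le; first exact: cvgP F_cvg.
apply: nearW => n.
have n01 : 0 < (n.+2%:R : R)^-1 < 1.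
  by rewrite invr_gt0 ltr0n /= invf_lt1 ?ltr0n// ltr1n.
rewrite integral_powR_itv1// lee_fin gerBl.
by rewrite mulr_ge0 ?invr_ge0 ?ltW ?powR_ge0.
Qed.

(* [x ^ (s - 1) <= x ^ (N + 1) <= 2 ^ (N + 1) (N + 1)! e^(x/2)] with [N = trunc s]. *)
Lemma gamma_integrand_le_expR_half s : exists K : R, 0 <= K /\
  forall x, 1 <= x -> gamma_integrand s x <= K * expR (- x / 2).
Proof.
pose N := Num.truncn s.
exists (2 ^+ N.+1 * (N.+1)`!%:R); split; first by rewrite mulr_ge0 ?exprn_ge0.
move=> x x1.
have x0 : 0 <= x by apply: le_trans x1.
have pow_le : x `^ (s - 1) <= x ^+ N.+1.
  rewrite -powR_mulrn//; apply: ler_powR => //.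
  by have := truncnS_gt s; rewrite -/N -addn1 natrD; lra.
have half_le : (x / 2) ^+ N.+1 <= (N.+1)`!%:R * expR (x / 2).
  have fact0 : 0 < (N.+1)`!%:R :> R by rewrite ltr0n fact_gt0.
  rewrite -ler_pdivrMl// mulrC.
  by apply: le_trans (expR_ge1Dxn N (_ : 0 <= x / 2)); lra.
rewrite /gamma_integrand (_ : expR (- x / 2) = expR (x / 2) * expR (- x)); last first.
  by rewrite -expRD; congr expR; lra.
rewrite mulrA ler_wpM2r ?expR_ge0//; apply: le_trans pow_le _.
rewrite (_ : x ^+ N.+1 = 2 ^+ N.+1 * (x / 2) ^+ N.+1); last first.
  by rewrite -exprMn; congr (_ ^+ _); field.
by rewrite -mulrA ler_wpM2l ?exprn_ge0.
Qed.

Lemma integral_gamma_integrand_tail_lty s :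
  (\int[mu]_(x in `]1%R, +oo[) (gamma_integrand s x)%:E < +oo)%E.
Proof.
have [K [K0 HK]] := gamma_integrand_le_expR_half s.
have half0 : (0 : R) < 2^-1 by rewrite invr_gt0.
have mpdf (A : set R) : measurable_fun A (EFin \o exponential_pdf 2^-1).
  apply/measurable_EFinP; apply: measurable_funTS.
  exact: measurable_exponential_pdf.
have pdf0 (x : R) : (0 <= (exponential_pdf 2^-1 x)%:E)%E.
  by rewrite lee_fin exponential_pdf_ge0// ltW.
apply: (@le_lt_trans _ _
   (\int[mu]_(x in `]1%R, +oo[) ((2 * K)%:E * (exponential_pdf 2^-1 x)%:E))%E).
  apply: ge0_le_integral => //.
  - by move=> x _; rewrite lee_fin gamma_integrand_ge0.
  - exact: measurable_gamma_integrand.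
  - by apply: emeasurable_funM; [exact: measurable_cst|exact: mpdf].
  move=> x; rewrite /= in_itv/= andbT => x1.
  rewrite -EFinM lee_fin exponential_pdfE ?(ltW (lt_trans ltr01 x1))//.
  apply: le_trans (HK x (ltW x1)) _.
  rewrite (_ : - 2^-1 * x = - x / 2); last by lra.
  by rewrite [X in _ <= X](_ : _ = K * expR (- x / 2)) //; field.
rewrite ge0_integralZl_EFin ?mulr_ge0//; last exact: mpdf.
apply: (@le_lt_trans _ _ ((2 * K)%:E * 1)%E); last by rewrite mule1 ltry.
apply: lee_wpmul2l; first by rewrite lee_fin mulr_ge0.
rewrite -(integral_exponential_pdf half0).
by apply: ge0_subset_integral => //; exact: mpdf.
Qed.

Lemma gamma_integrand_ge_itv12 s x : 1 <= x <= 2 ->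
  expR (- `|s - 1|) * expR (-2) <= gamma_integrand s x.
Proof.
move=> /andP[x1 x2].
have x0 : 0 < x by apply: lt_le_trans x1.
have lnx0 : 0 <= ln x by rewrite ln_ge0.
have lnx1 : ln x <= 1.
  by have := @le_ln1Dx R (x - 1) ltac:(lra); rewrite addrC subrK; lra.
rewrite /gamma_integrand /powR gt_eqF//.
apply: ler_pM; rewrite ?expR_ge0// ler_expR; last by lra.
have : - `|s - 1| <= s - 1 by rewrite lerNl -normrN ler_norm.
have : 0 <= `|s - 1| by [].
nra.
Qed.

Lemma Gamma_gt0 s : 0 < s -> 0 < Gamma s.
Proof.
move=> s0; rewrite /Gamma -/(gamma_integrand s _).
set I := (\int[mu]_(x in _) _)%E.
have I_lty : (I < +oo)%E.
  rewrite /I (@itv_bndbnd_setU _ _ (BRight 0%R) (BRight 1%R) (BInfty _ false))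
    ?bnd_simp// ge0_integral_setU //=; last 3 first.
  - exact: measurable_gamma_integrand.
  - by move=> x _; rewrite lee_fin gamma_integrand_ge0.
  - apply/disj_setPS => x [] /=; rewrite !in_itv/= andbT => /andP[_ x1] x1'.
    by move: (lt_le_trans x1' x1); rewrite ltxx.
  apply: lte_add_pinfty; last exact: integral_gamma_integrand_tail_lty.
  apply: (le_lt_trans _ (ltry (s^-1))); apply: le_trans (integral_powR_itv01_le s0).
  apply: ge0_le_integral => //.
  - by move=> x _; rewrite lee_fin gamma_integrand_ge0.
  - exact: measurable_gamma_integrand.
  - by apply/measurable_EFinP; apply: measurable_funTS; exact: measurable_powR.
  move=> x; rewrite /= in_itv/= => /andP[x0 _]; rewrite lee_fin.
  by rewrite ler_piMr ?powR_ge0// expR_le1; lra.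
pose c := expR (- `|s - 1|) * expR (-2).
have I_ge : (c%:E <= I)%E.
  apply: (@le_trans _ _ (\int[mu]_(x in `[1%R, 2%R]) c%:E)%E).
    rewrite integral_cst// /= lebesgue_measure_itv/= lte_fin ifT; last by lra.
    by rewrite -EFinD -EFinM lee_fin (_ : 2 + -1 = 1 :> R) ?mulr1//; lra.
  apply: (@le_trans _ _ (\int[mu]_(x in `[1%R, 2%R]) (gamma_integrand s x)%:E)%E).
    apply: ge0_le_integral => //.
    - by move=> x _; rewrite lee_fin mulr_ge0 ?expR_ge0.
    - exact: measurable_gamma_integrand.
    by move=> x; rewrite /= in_itv/= => h; rewrite lee_fin gamma_integrand_ge_itv12.
  apply: ge0_subset_integral => //.
  - exact: measurable_gamma_integrand.
  - by move=> x _; rewrite lee_fin gamma_integrand_ge0.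
  by move=> x; rewrite /= !in_itv/= andbT => /andP[x1 _]; lra.
apply: fine_gt0; rewrite I_lty andbT.
by apply: lt_le_trans I_ge; rewrite lte_fin mulr_gt0 ?expR_gt0.
Qed.

End Gamma_positive.

Section null_sets.
Context {R : realType}.

Lemma nu_null_set (A : set R) : measurable A -> @nu R A = 0%E ->
  [/\ lebesgue_measure A = 0%E, ~ A 0 & ~ A 1].
Proof.
move=> mA.
rewrite /nu /= /msum !big_ord_recl big_ord0 /= adde0.
rewrite /msum !big_ord_recl big_ord0 /= adde0 !diracE => /eqP.
rewrite padde_eq0 ?adde_ge0 ?measure_ge0// => /andP[].
rewrite padde_eq0 ?measure_ge0// => /andP[/eqP lA d0 d1].
by split=> // [/mem_set A0|/mem_set A1]; [move: d0|move: d1];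
  rewrite ?A0 ?A1 eqe oner_eq0.
Qed.

(* A neighbourhood of [y0] on which [f <> c] would be a Lebesgue-null interval. *)
Lemma continuous_eq_off_null (A : set R) (f : R -> R) (c lo hi y0 : R) :
  measurable A -> lebesgue_measure A = 0%E -> lo < y0 < hi ->
  {for y0, continuous f} -> (forall y, lo < y < hi -> ~ A y -> f y = c) ->
  f y0 = c.
Proof.
move=> mA A0 /andP[loy0 y0hi] cf fc; apply: contrapT => /eqP fy0.
have e0 : 0 < `|f y0 - c| by rewrite normr_gt0 subr_eq0.
have /cvgrPdist_lt/(_ _ e0) f_near := cf.
have itv_near : \forall y \near y0, lo < y < hi.
  near=> y; apply/andP; split; near: y; [exact: lt_nbhsr | exact: lt_nbhsl].
have [e e0' ball_sub] := proj1 (nbhs_ballP _ _) (filterI f_near itv_near).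
have itv_sub : [set` `]y0 - e, y0 + e[] `<=` A.
  move=> y; rewrite -ball_itv => /ball_sub [/= fyc yitv].
  by apply: contrapT => Ay; move: fyc; rewrite (fc y) // ltxx.
have A_le0 : (lebesgue_measure A <= 0)%E by rewrite A0.
have := le_trans (le_measure lebesgue_measure (mem_set (measurable_itv _))
  (mem_set mA) itv_sub) A_le0.
have e_gt0 : 0 < e by [].
rewrite /= lebesgue_measure_itv/= lte_fin ifT; last by lra.
by rewrite -EFinD lee_fin; lra.
Unshelve. all: by end_near.
Qed.

End null_sets.

Section affine_independence.
Context {R : realType}.

Lemma dotv_shift (k : nat) (a x : 'I_k -> R) (i : 'I_k) (d : R) :
  dotv a (fun j => x j + (j == i)%:R * d) = dotv a x + a i * d.
Proof.
rewrite /dotv (bigD1 i)//= [in RHS](bigD1 i)//= eqxx mul1r mulrDr -!addrA.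
congr (_ + _); rewrite addrC; congr (_ + _).
by apply: eq_bigr => j /negbTE ->; rewrite mul0r addr0.
Qed.

Lemma dotv_const_on_box_eq0 (k : nat) (a lo hi : 'I_k -> R) (c : R) :
  (forall i, lo i < hi i) ->
  (forall x, (forall i, lo i < x i < hi i) -> dotv a x = c) -> a = (fun=> 0).
Proof.
move=> lohi Ha; apply/funext => i.
pose mid j := (lo j + hi j) / 2.
have mid_in j : lo j < mid j < hi j by have := lohi j; rewrite /mid; lra.
pose d := (hi i - lo i) / 4.
have d_gt0 : 0 < d by have := lohi i; rewrite /d; lra.
have : dotv a (fun j => mid j + (j == i)%:R * d) = dotv a mid.
  rewrite !Ha // => j; have := mid_in j; case: eqVneq => [->|_] /=.
    by rewrite mul1r; have := lohi i; rewrite /mid /d; lra.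
  by rewrite mul0r addr0.
rewrite dotv_shift => /eqP.
by rewrite addrC -subr_eq0 addrK mulf_eq0 (gt_eqF d_gt0) orbF => /eqP.
Qed.

Lemma ln_ln1B_const_eq0 (b1 b2 c : R) :
  (forall y, 0 < y < 1 -> b1 * ln y + b2 * ln (1 - y) = c) ->
  [/\ b1 = 0, b2 = 0 & c = 0].
Proof.
move=> H.
have E1 := H 4^-1 ltac:(apply/andP; split; lra).
have E2 := H (1 - 4^-1) ltac:(apply/andP; split; lra).
have E3 := H 2^-1 ltac:(apply/andP; split; lra).
rewrite (_ : 1 - (1 - 4^-1) = 4^-1) in E2; last by lra.
rewrite (_ : 1 - 2^-1 = 2^-1) in E3; last by lra.
set L1 := ln 4^-1 in E1 E2; set L3 := ln (1 - 4^-1) in E1 E2; set L2 := ln 2^-1 in E3.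
have L12 : L1 = L2 + L2.
  by rewrite /L1 /L2 -lnM ?posrE // -invfM (_ : (2 : R) * 2 = 4) //; lra.
have L3_lt0 : L3 < 0 by rewrite /L3 ln_lt0 //; apply/andP; split; lra.
have L13 : L1 < L3 by rewrite /L1 /L3 ltr_ln ?posrE; lra.
(* [y = 1/4, 3/4] force [b1 = b2]; then [y = 1/2] against [y = 1/4] gives [b1 L3 = 0] *)
have b12 : b1 = b2.
  have L13_neq0 : L1 - L3 != 0 by rewrite subr_eq0 lt_eqF.
  apply/eqP; rewrite -subr_eq0; apply/eqP/(mulIf L13_neq0).
  by rewrite mul0r; transitivity ((b1 * L1 + b2 * L3) - (b1 * L3 + b2 * L1));
    [ring|rewrite E1 E2 subrr].
have b1_0 : b1 = 0.
  apply/(mulIf (negbT (lt_eqF L3_lt0))); rewrite mul0r.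
  transitivity ((b1 * L1 + b2 * L3) - (b1 * L2 + b2 * L2)).
    by rewrite -b12 L12; ring.
  by rewrite E1 E3 subrr.
by split; rewrite -?b12 // -E3 -b12 b1_0 !mul0r addr0.
Qed.

End affine_independence.

Section four_vectors.
Context {R : realType}.

Lemma nth_inord4 (s : seq R) k : (k < 4)%N -> s`_(inord k : 'I_4) = s`_k.
Proof. by move=> k4; rewrite inordK. Qed.

Lemma dotv4 (u v : 'I_4 -> R) : dotv u v =
  u (inord 0) * v (inord 0) + u (inord 1) * v (inord 1) +
  u (inord 2) * v (inord 2) + u (inord 3) * v (inord 3).
Proof.
rewrite /dotv !big_ord_recl big_ord0 addr0 !addrA.
by congr (u _ * v _ + u _ * v _ + u _ * v _ + u _ * v _);
  apply/val_inj; rewrite /= inordK.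
Qed.

Lemma fun4_eq (u v : 'I_4 -> R) :
  (forall k, (k < 4)%N -> u (inord k) = v (inord k)) -> u = v.
Proof. by move=> uv; apply/funext => i; rewrite -(inord_val i) uv. Qed.

End four_vectors.

Section beinf_exponential_family.
Context {R : realType}.
Implicit Types (th : R * R * R * R) (x : 'I_4 -> R) (y : R).

Definition beta_const (m p : R) : R :=
  Gamma p / (Gamma (m * p) * Gamma ((1 - m) * p)).

Lemma beta_const_gt0 (m p : R) : 0 < m < 1 -> 0 < p -> 0 < beta_const m p.
Proof.
move=> /andP[m0 m1] p0.
by rewrite divr_gt0 ?mulr_gt0 ?Gamma_gt0 ?mulr_gt0 ?subr_gt0.
Qed.

Definition beinf_eta th : 'I_4 -> R := let: (a, g, m, p) := th in
  fun i => [:: ln (a * (1 - g) / ((1 - a) * beta_const m p));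
               ln (a * g / ((1 - a) * beta_const m p)); m * p; (1 - m) * p]`_i.

Definition beinf_eta_inv x : R * R * R * R :=
  let p := x (inord 2) + x (inord 3) in
  let m := x (inord 2) / p in
  let u0 := beta_const m p * expR (x (inord 0)) in
  let u1 := beta_const m p * expR (x (inord 1)) in
  ((u0 + u1) / (1 + (u0 + u1)), u1 / (u0 + u1), m, p).

(* In closed form,
   [B x = ln (e ^ x0 + e ^ x1 + Gamma x2 Gamma x3 / Gamma (x2 + x3))]. *)
Definition beinf_B x : R :=
  let: (a, _, m, p) := beinf_eta_inv x in - ln ((1 - a) * beta_const m p).

(* Since [ln 0 = 0], [T 0 = (1, 0, 0, 0)], [T 1 = (0, 1, 0, 0)] and [h] is [1]
   at the atoms, while [h y = 1 / (y (1 - y))] on [(0, 1)]. *)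
Definition beinf_T y : 'I_4 -> R :=
  fun i => [:: (y == 0)%:R; (y == 1)%:R; ln y; ln (1 - y)]`_i.

Definition beinf_h y : R := expR (- ln y - ln (1 - y)).

Lemma beinf_eta_invK th : beinf_param_space th ->
  beinf_eta_inv (beinf_eta th) = th.
Proof.
case: th => [[[a g] m] p] [/andP[a0 a1] /andP[g0 g1] /andP[m0 m1] p0].
have C0 := beta_const_gt0 (m := m) ltac:(lra) p0.
rewrite /beinf_eta_inv /beinf_eta !nth_inord4 //=.
have -> : m * p + (1 - m) * p = p by ring.
rewrite mulfK ?lt0r_neq0 //; move: (beta_const m p) C0 => C C0.
rewrite !lnK ?posrE ?divr_gt0 ?mulr_gt0 ?subr_gt0 //.
have a1n : 1 - a != 0 by rewrite subr_eq0 gt_eqF.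
have -> : C * (a * g / ((1 - a) * C)) = a * g / (1 - a).
  by field; rewrite a1n lt0r_neq0.
have -> : C * (a * (1 - g) / ((1 - a) * C)) + a * g / (1 - a) = a / (1 - a).
  by field; rewrite a1n lt0r_neq0.
by congr (_, _, _, _); field; rewrite ?subrK ?oner_neq0 ?a1n ?gt_eqF.
Qed.

Lemma beinf_eta_inj th1 th2 : beinf_param_space th1 -> beinf_param_space th2 ->
  beinf_eta th1 = beinf_eta th2 -> th1 = th2.
Proof. by move=> th1P th2P E; rewrite -(beinf_eta_invK th1P) E beinf_eta_invK. Qed.

Lemma beinf_eta_invP x : 0 < x (inord 2) -> 0 < x (inord 3) ->
  beinf_param_space (beinf_eta_inv x) /\ beinf_eta (beinf_eta_inv x) = x.
Proof.
move=> x2 x3; rewrite /beinf_eta_inv /=.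
set p := x (inord 2) + _; set m := x (inord 2) / p; set C := beta_const m p.
set u0 := C * expR (x (inord 0)); set u1 := C * expR (x (inord 1)).
have p0 : 0 < p by rewrite addr_gt0.
have m01 : 0 < m < 1 by rewrite divr_gt0 //= ltr_pdivrMr // mul1r ltrDl.
have C0 : 0 < C by exact: beta_const_gt0.
have u0_gt0 : 0 < u0 by rewrite mulr_gt0 ?expR_gt0.
have u1_gt0 : 0 < u1 by rewrite mulr_gt0 ?expR_gt0.
have U0 : 0 < u0 + u1 by rewrite addr_gt0.
split.
  by split=> //; rewrite ?divr_gt0 ?addr_gt0 //= ltr_pdivrMr ?addr_gt0 //;
    rewrite mul1r ?ltrDr ?ltrDl.
apply: fun4_eq => k k4; rewrite nth_inord4 //.
case: k k4 => [|[|[|[|//]]]] _ /=.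
- rewrite -[RHS]expRK; congr ln.
  rewrite (_ : expR _ = u0 / C); last by rewrite /u0 /u1 mulrAC divff ?mul1r ?lt0r_neq0.
  by field; rewrite addrK oner_neq0 !lt0r_neq0 // addr_gt0.
- rewrite -[RHS]expRK; congr ln.
  rewrite (_ : expR _ = u1 / C); last by rewrite /u0 /u1 mulrAC divff ?mul1r ?lt0r_neq0.
  by field; rewrite addrK oner_neq0 !lt0r_neq0 // addr_gt0.
- by rewrite divfK ?gt_eqF.
- by rewrite mulrBl mul1r divfK ?gt_eqF // addrC addKr.
Qed.

Lemma beinf_exp_form th y : beinf_param_space th -> [set` `[0%R, 1%R]] y ->
  beinf y th =
    expR (dotv (beinf_eta th) (beinf_T y) - beinf_B (beinf_eta th)) * beinf_h y.
Proof.
move=> thP; rewrite /beinf_B beinf_eta_invK //.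
case: th thP => [[[a g] m] p] [/andP[a0 a1] /andP[g0 g1] /andP[m0 m1] p0].
rewrite /= opprK in_itv/= => /andP[y0 y1].
have C0 : 0 < beta_const m p by apply: beta_const_gt0; rewrite ?m0.
rewrite /beta_dens -/(beta_const m p); move: (beta_const m p) C0 => C C0.
have K0 : 0 < (1 - a) * C by rewrite mulr_gt0 ?subr_gt0.
have expR_lnM u : 0 < u -> expR (ln (u / ((1 - a) * C)) + ln ((1 - a) * C)) = u.
  by move=> u0; rewrite expRD !lnK ?posrE ?divr_gt0 // divfK ?lt0r_neq0.
rewrite dotv4 /beinf_T !nth_inord4 //= /beinf_h.
have [->|yn0] := eqVneq y 0.
  rewrite eq_sym oner_eq0 subr0 (@ln0 _ 0) // ln1 !mulr0 mulr1 !addr0.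
  by rewrite subr0 oppr0 expR0 mulr1 expR_lnM // mulr_gt0 ?subr_gt0.
have [->|yn1] := eqVneq y 1.
  rewrite subrr (@ln0 _ 0) // ln1 !mulr0 mulr1 add0r !addr0.
  by rewrite subr0 oppr0 expR0 mulr1 expR_lnM // mulr_gt0.
have y01 : 0 < y < 1 by rewrite !lt_neqAle eq_sym yn0 yn1 y0 y1.
have /andP[y0' y1'] := y01; have y1'' : 0 < 1 - y by rewrite subr_gt0.
rewrite y01 !mulr0 !add0r /powR !gt_eqF // -expRD !mulrA.
rewrite -{1}[(1 - a) * C]lnK ?posrE //.
by rewrite -!expRD; congr expR; ring.
Qed.

Lemma beinf_T_affine_indep (a : 'I_4 -> R) (c : R) :
  {ae @nu R, forall y, [set` `[0%R, 1%R]] y -> dotv a (beinf_T y) = c} ->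
  a = (fun=> 0).
Proof.
move=> [A [mA /(nu_null_set mA) [A0 nA0 nA1] notP_sub]].
have off_A y : [set` `[0%R, 1%R]] y -> ~ A y -> dotv a (beinf_T y) = c.
  by move=> y01 nAy; apply: contrapT => Pyn; apply/nAy/notP_sub => /(_ y01).
have itv01_0 : [set` `[0%R, 1%R]] (0 : R) by rewrite /= in_itv/= lexx ler01.
have itv01_1 : [set` `[0%R, 1%R]] (1 : R) by rewrite /= in_itv/= lexx ler01.
have := off_A 0 itv01_0 nA0; have := off_A 1 itv01_1 nA1.
rewrite !dotv4 /beinf_T !nth_inord4 //= !eqxx oner_eq0 eq_sym oner_eq0 subrr subr0.
rewrite !(@ln0 _ 0) // ln1 !mulr0 !mulr1 !addr0 add0r => a1c a0c.
set a2 := a (inord 2); set a3 := a (inord 3).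
have ln_lin y : 0 < y < 1 -> a2 * ln y + a3 * ln (1 - y) = c.
  move=> /[dup] y01 /andP[y0 y1].
  apply: (continuous_eq_off_null (f := fun z => a2 * ln z + a3 * ln (1 - z)) mA A0 y01).
    have ln1B_cont : {for y, continuous (@ln R \o (fun z => 1 - z))}.
      apply: continuous_comp; first by apply: cvgB; [exact: cvg_cst|exact: cvg_id].
      by apply: continuous_ln; rewrite subr_gt0.
    by apply: cvgD; apply: cvgM; [exact: cvg_cst|exact: continuous_ln|exact: cvg_cst|].
  move=> z /[dup] z01 /andP[z0 z1] nAz.
  rewrite -(off_A z _ nAz); last by rewrite /= in_itv/= !ltW.
  by rewrite dotv4 /beinf_T !nth_inord4 //= gt_eqF // lt_eqF // !mulr0 !add0r.
have [a2_0 a3_0 c0] := ln_ln1B_const_eq0 ln_lin.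
by apply: fun4_eq => -[|[|[|[|//]]]] _; rewrite ?a0c ?a1c.
Qed.

Lemma beinf_eta_box : exists lo hi : 'I_4 -> R, (forall i, lo i < hi i) /\
  (forall x : 'I_4 -> R, (forall i, lo i < x i < hi i) ->
     exists2 th, beinf_param_space th & beinf_eta th = x).
Proof.
exists (fun=> 1), (fun=> 2); split=> [i|x x12]; first lra.
have x_gt0 i : 0 < x i by have /andP[x1 _] := x12 i; lra.
by have [] := beinf_eta_invP (x_gt0 _) (x_gt0 _); exists (beinf_eta_inv x).
Qed.

Lemma beinf_eta_affine_indep (a : 'I_4 -> R) (c : R) :
  (forall th, beinf_param_space th -> dotv a (beinf_eta th) = c) -> a = (fun=> 0).
Proof.
move=> dot_eta; have [lo [hi [lohi box]]] := beinf_eta_box.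
by apply: (dotv_const_on_box_eq0 lohi) => x /box [th thP <-]; exact: dot_eta.
Qed.

End beinf_exponential_family.

Theorem proposition2 (R : realType) :
  exp_family_full_rank (@nu R) `[0%R, 1%R] (@beinf_param_space R)
    (fun th y => beinf y th) 4.
Proof.
exists beinf_eta, beinf_T, beinf_B, beinf_h.
split; first exact: beinf_eta_inj.
split; first by move=> y _; exact: expR_gt0.
split; first by move=> th y; exact: beinf_exp_form.
split; first exact: beinf_T_affine_indep.
split; first exact: beinf_eta_affine_indep.
exact: beinf_eta_box.
Qed.
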